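(* Let $\mathcal P$ and $\mathrm{conv}(\mathcal P)$ be as in the context. Let $\eta$ be a real number with $0\le\eta\le\min\{L,(\overline C-\overline V)/V\}$ and let $\alpha,\beta,s_{\max}$ be integers such that (a) $L+1\le s_{\max}\le\min\{T-2,\lfloor(\overline C-\overline V)/V\rfloor\}$, (b) $1\le\alpha<\beta\le s_{\max}$, and (c) $\beta=\alpha+1$ or $s_{\max}\le L+\alpha$. Let $\mathcal S=[1,\alpha]_{\mathbb Z}\cup[\beta,s_{\max}]_{\mathbb Z}$. For any $t\in[s_{\max}+2,T]_{\mathbb Z}$, the inequality $$x_t\le(\overline V+\eta V)y_t+(\overline C-\overline V-\eta V)y_{t-1}-\sum_{s\in\mathcal S}(\overline C-\overline V-sV)(y_{t-s}-y_{t-s-1})\qquad(\ast)$$ is valid for $\mathrm{conv}(\mathcal P)$. For any $t\in[1,T-s_{\max}-1]_{\mathbb Z}$, the inequality $$x_t\le(\overline V+\eta V)y_t+(\overline C-\overline V-\eta V)y_{t+1}-\sum_{s\in\mathcal S}(\overline C-\overline V-sV)(y_{t+s}-y_{t+s+1})\qquad(\ast\ast)$$ is valid for $\mathrm{conv}(\mathcal P)$. Furthermore, $(\ast)$ and $(\ast\ast)$ are facet-defining for $\mathrm{conv}(\mathcal P)$ when $\eta\in\{0,(\overline C-\overline V)/V\}$ or $\eta=L\in\mathcal S$.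
   Context: For integers $a,b$, $[a,b]_{\mathbb Z}=\{a,a+1,\dots,b\}$ if $a\le b$ and $\emptyset$ otherwise. Fix a positive integer $T$, positive integers $L$ (minimum up time) and $\ell$ (minimum down time), and reals $\overline C,\underline C,V,\overline V$ with $\overline C>\underline C>0$, $V>0$, $\overline V+V\le\overline C$ and $\underline C<\overline V<\underline C+V$. $\mathcal P$ is the set of $(\mathbf x,\mathbf y)=((x_1,\dots,x_T),(y_1,\dots,y_T))\in\mathbb R_+^T\times\{0,1\}^T$ satisfying: (i) $-y_{t-1}+y_t-y_k\le 0$ for all $t\in[2,T]_{\mathbb Z}$, $k\in[t,\min\{T,t+L-1\}]_{\mathbb Z}$; (ii) $y_{t-1}-y_t+y_k\le 1$ for all $t\in[2,T]_{\mathbb Z}$, $k\in[t,\min\{T,t+\ell-1\}]_{\mathbb Z}$; (iii) $-x_t+\underline C y_t\le 0$ and $x_t-\overline C y_t\le 0$ for all $t\in[1,T]_{\mathbb Z}$; (iv) $x_t-x_{t-1}\le Vy_{t-1}+\overline V(1-y_{t-1})$ for all $t\in[2,T]_{\mathbb Z}$; (v) $x_{t-1}-x_t\le Vy_t+\overline V(1-y_t)$ for all $t\in[2,T]_{\mathbb Z}$. $\mathrm{conv}(\mathcal P)\subseteq\mathbb R^{2T}$ is its convex hull. A linear inequality is valid for $\mathrm{conv}(\mathcal P)$ if all its points satisfy it, and facet-defining if moreover the set of points of $\mathrm{conv}(\mathcal P)$ satisfying it with equality has dimension $\dim\mathrm{conv}(\mathcal P)-1$. *)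

From mathcomp Require Import all_boot all_order all_algebra.
From mathcomp Require Import reals.
Set Implicit Arguments.
Unset Strict Implicit.
Unset Printing Implicit Defensive.
Import Order.TTheory GRing.Theory Num.Theory.
Local Open Scope ring_scope.

(* Points of R^{2T} are row vectors z : 'rV[R]_(T + T); coordinate k (0-based)
   of z is [ent z k] (0 if k is out of range, never used). *)
Definition ent (R : realType) (n : nat) (z : 'rV[R]_n) (k : nat) : R :=
  odflt 0 (omap (fun i : 'I_n => z 0 i) (insub k)).

(* x_t = coordinate t-1,  y_t = coordinate T + t - 1  (t in [1,T]). *)
Definition xc (R : realType) (T : nat) (z : 'rV[R]_(T + T)) (t : nat) : R :=
  ent z t.-1.
Definition yc (R : realType) (T : nat) (z : 'rV[R]_(T + T)) (t : nat) : R :=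
  ent z (T + t.-1).
Arguments xc {R} T z t.
Arguments yc {R} T z t.

Definition inP (R : realType) (T L ell : nat) (Cbar Cund V Vbar : R)
  (z : 'rV[R]_(T + T)) : Prop :=
  (forall t, (1 <= t <= T)%N -> 0 <= xc T z t) /\
  (forall t, (1 <= t <= T)%N -> yc T z t = 0 \/ yc T z t = 1) /\
  (forall t k, (2 <= t <= T)%N -> (t <= k <= minn T (t + L - 1))%N ->
     - yc T z t.-1 + yc T z t - yc T z k <= 0) /\
  (forall t k, (2 <= t <= T)%N -> (t <= k <= minn T (t + ell - 1))%N ->
     yc T z t.-1 - yc T z t + yc T z k <= 1) /\
  (forall t, (1 <= t <= T)%N ->
     - xc T z t + Cund * yc T z t <= 0 /\ xc T z t - Cbar * yc T z t <= 0) /\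
  (forall t, (2 <= t <= T)%N ->
     xc T z t - xc T z t.-1 <= V * yc T z t.-1 + Vbar * (1 - yc T z t.-1)) /\
  (forall t, (2 <= t <= T)%N ->
     xc T z t.-1 - xc T z t <= V * yc T z t + Vbar * (1 - yc T z t)).

Arguments inP {R} T L ell Cbar Cund V Vbar z.

Definition conv (R : realType) (n : nat) (A : 'rV[R]_n -> Prop) (z : 'rV[R]_n)
  : Prop :=
  exists (m : nat) (p : 'I_m -> 'rV[R]_n) (w : 'I_m -> R),
    (forall i, A (p i)) /\ (forall i, 0 <= w i) /\ \sum_(i < m) w i = 1 /\
    z = \sum_(i < m) w i *: p i.

(* Affine dimension of a set of points (empty set has dimension -1):
   the maximal rank of the difference matrix of finitely many points of A. *)
Definition diffmx (R : realType) (n m : nat) (p : 'I_m.+1 -> 'rV[R]_n)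
  : 'M[R]_(m, n) := \matrix_(i < m) (p (lift ord0 i) - p ord0).

Definition has_affdim (R : realType) (n : nat) (A : 'rV[R]_n -> Prop) (d : int)
  : Prop :=
  ((forall z, ~ A z) /\ d = -1) \/
  (exists k : nat, d = k%:Z /\
     (exists (m : nat) (p : 'I_m.+1 -> 'rV[R]_n),
         (forall i, A (p i)) /\ \rank (diffmx p) = k) /\
     (forall (m : nat) (p : 'I_m.+1 -> 'rV[R]_n),
         (forall i, A (p i)) -> (\rank (diffmx p) <= k)%N)).

Definition valid_for (R : realType) (n : nat) (A : 'rV[R]_n -> Prop)
  (lhs rhs : 'rV[R]_n -> R) : Prop :=
  forall z, A z -> lhs z <= rhs z.

Definition facet_for (R : realType) (n : nat) (A : 'rV[R]_n -> Prop)
  (lhs rhs : 'rV[R]_n -> R) : Prop :=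
  valid_for A lhs rhs /\
  exists d : int, has_affdim A d /\
    has_affdim (fun z => A z /\ lhs z = rhs z) (d - 1).

Definition inS (alpha beta smax s : nat) : bool :=
  ((1 <= s <= alpha) || (beta <= s <= smax))%N.

From Pilot Require Import Defs.
From mathcomp Require Import all_boot all_order all_algebra.
From mathcomp Require Import fingroup perm.
From mathcomp Require Import reals.
From mathcomp Require Import zify ring lra.
Set Implicit Arguments.
Unset Strict Implicit.
Unset Printing Implicit Defensive.
Import Order.TTheory GRing.Theory Num.Theory.
Local Open Scope ring_scope.

Section ConvexHull.
Variables (R : realType) (n : nat).
Implicit Types (P Q : 'rV[R]_n -> Prop) (f g : 'rV[R]_n -> R).

Lemma scalar_sum f : scalar f ->
  forall m (w : 'I_m -> R) (p : 'I_m -> 'rV[R]_n),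
  f (\sum_(i < m) w i *: p i) = \sum_(i < m) w i * f (p i).
Proof.
move=> lin_f; have f0 : f 0 = 0.
  by have := lin_f 1 0 0; rewrite scale1r mul1r addr0; lra.
elim=> [|m IHm] w p; first by rewrite !big_ord0.
by rewrite !big_ord_recr /= addrC lin_f IHm addrC.
Qed.

Lemma conv_mem P z : P z -> conv P z.
Proof.
move=> Pz; exists 1%N, (fun=> z), (fun=> 1).
by do !split; rewrite ?big_ord1 ?scale1r // => _; exact: ler01.
Qed.

Lemma conv_valid P f g : scalar f -> scalar g ->
  (forall z, P z -> f z <= g z) -> valid_for (conv P) f g.
Proof.
move=> lin_f lin_g fg z [m [p [w [Pp [w_ge0 [_ ->]]]]]].
rewrite !scalar_sum //; apply: ler_sum => i _.
by rewrite ler_wpM2l // fg.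
Qed.

Lemma rank_diffmx_hyperplane f (c : 'I_n) m (p : 'I_m.+1 -> 'rV[R]_n) :
  scalar f -> f (delta_mx 0 c) != 0 -> (forall i, f (p i) = 0) ->
  (\rank (Defs.diffmx p) <= n.-1)%N.
Proof.
move=> lin_f fc0 fp0.
suff : (\rank (Defs.diffmx p) < n)%N by lia.
rewrite ltn_neqAle rank_leq_col andbT; apply: contra fc0 => /eqP full.
have : ((delta_mx 0 c : 'rV_n) <= Defs.diffmx p)%MS.
  by apply: submx_full; rewrite /row_full full.
case/submxP => w ->; rewrite mulmx_sum_row scalar_sum //.
apply/eqP/big1 => i _.
by rewrite /Defs.diffmx rowK addrC -scaleN1r lin_f !fp0 !(mulr0, addr0).
Qed.

Lemma rank_ge_of_full_adds m (B : 'M[R]_(m, n)) (v : 'rV[R]_n) :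
  (1%:M <= B + v)%MS -> (n.-1 <= \rank B)%N.
Proof.
move=> full; have := mxrankS full; rewrite mxrank1 => le_n.
have := (mxrank_adds_leqif B v).1; have := rank_leq_row v; lia.
Qed.

Definition origin_pts (s : seq 'rV[R]_n) : 'I_(size s).+1 -> 'rV[R]_n :=
  fun i => nth 0 (0 :: s) i.
Arguments origin_pts : clear implicits.

Lemma origin_ptsP (s : seq 'rV[R]_n) i : origin_pts s i \in 0 :: s.
Proof. exact: mem_nth. Qed.

Lemma origin_pts_sub (s : seq 'rV[R]_n) q : q \in s -> (q <= Defs.diffmx (origin_pts s))%MS.
Proof.
move=> sq; have lt_q : (index q s < size s)%N by rewrite index_mem.
suff -> : q = row (Ordinal lt_q) (Defs.diffmx (origin_pts s)) by exact: row_sub.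
by rewrite /Defs.diffmx rowK /origin_pts /= subr0 nth_index.
Qed.

Lemma facet_for_conv P f g (c : 'I_n) :
  scalar f -> scalar g -> (forall z, P z -> f z <= g z) ->
  f (delta_mx 0 c) != g (delta_mx 0 c) ->
  (exists m (p : 'I_m.+1 -> 'rV[R]_n),
     (forall i, P (p i)) /\ \rank (Defs.diffmx p) = n) ->
  (exists m (p : 'I_m.+1 -> 'rV[R]_n),
     (forall i, P (p i) /\ f (p i) = g (p i)) /\ (n.-1 <= \rank (Defs.diffmx p))%N) ->
  facet_for (conv P) f g.
Proof.
move=> lin_f lin_g fg fgc [m1 [p1 [Pp1 rk1]]] [m2 [p2 [Pp2 rk2]]].
have lin_fg : scalar (fun z => f z - g z).
  by move=> a u v /=; rewrite lin_f lin_g; ring.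
have rk_face m (p : 'I_m.+1 -> 'rV[R]_n) : (forall i, f (p i) = g (p i)) ->
    (\rank (Defs.diffmx p) <= n.-1)%N.
  move=> fgp; apply: (rank_diffmx_hyperplane (c := c)) lin_fg _ _.
    by rewrite subr_eq0.
  by move=> i; rewrite fgp subrr.
split; first exact: conv_valid.
have n_gt0 : (0 < n)%N by apply: leq_ltn_trans (ltn_ord c).
exists n; split.
  right; exists n; split=> //; split; last by move=> *; exact: rank_leq_col.
  by exists m1, p1; split=> // i; apply: conv_mem.
right; exists n.-1; split; first lia.
split; last by move=> m p Pp; apply: rk_face => i; case: (Pp i).
exists m2, p2; split; first by move=> i; case: (Pp2 i) => ? ?; split=> //; exact: conv_mem.
by apply/eqP; rewrite eqn_leq rk2 rk_face // => i; case: (Pp2 i).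
Qed.

End ConvexHull.

Arguments origin_pts {R n} s i.

Section LinearSymmetry.
Variables (R : realType) (n : nat) (P : 'rV[R]_n -> Prop) (G : 'M[R]_n).
Hypotheses (GK : G *m G = 1%:M) (PG : forall z, P z -> P (z *m G)).

Lemma mulmxGK (z : 'rV[R]_n) : z *m G *m G = z.
Proof. by rewrite -mulmxA GK mulmx1. Qed.

Lemma conv_mulmx z : conv P (z *m G) <-> conv P z.
Proof.
suff convG u : conv P u -> conv P (u *m G).
  by split=> [/convG|]; [rewrite mulmxGK | exact: convG].
move=> [m [p [w [Pp [w_ge0 [w1 ->]]]]]].
exists m, (fun i => p i *m G), w; do !split=> //; first by move=> i; exact: PG.
by rewrite mulmx_suml; apply: eq_bigr => i _; rewrite scalemxAl.
Qed.

Lemma rank_diffmx_mulmx m (p : 'I_m.+1 -> 'rV[R]_n) :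
  \rank (Defs.diffmx (fun i => p i *m G)) = \rank (Defs.diffmx p).
Proof.
have diffG q : Defs.diffmx (fun i => q i *m G) = Defs.diffmx q *m G :> 'M_(m, n).
  by apply/row_matrixP => i; rewrite row_mul !rowK mulmxBl.
apply/eqP; rewrite eqn_leq diffG mxrankM_maxl /=.
by have := mxrankM_maxl (Defs.diffmx p *m G) G; rewrite -mulmxA GK mulmx1.
Qed.

Lemma has_affdim_mulmx (Q Q' : 'rV[R]_n -> Prop) d :
  (forall z, Q' z <-> Q (z *m G)) -> has_affdim Q d -> has_affdim Q' d.
Proof.
move=> QQ' [[Q0 ->]|[k [-> [[m [p [Qp rk]]] rk_le]]]].
  by left; split=> // z /QQ' /Q0.
right; exists k; split=> //; split.
  exists m, (fun i => p i *m G); split; last by rewrite rank_diffmx_mulmx.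
  by move=> i; apply/QQ'; rewrite mulmxGK.
by move=> m' p' /(_ _)/QQ' Qp'; rewrite -rank_diffmx_mulmx; exact: rk_le.
Qed.

Lemma valid_for_mulmx f g f' g' :
  (forall z, f' z = f (z *m G)) -> (forall z, g' z = g (z *m G)) ->
  valid_for (conv P) f g -> valid_for (conv P) f' g'.
Proof. by move=> ff' gg' fg z /conv_mulmx/fg; rewrite ff' gg'. Qed.

Lemma facet_for_mulmx f g f' g' :
  (forall z, f' z = f (z *m G)) -> (forall z, g' z = g (z *m G)) ->
  facet_for (conv P) f g -> facet_for (conv P) f' g'.
Proof.
move=> ff' gg' [fg [d [dimP dimF]]]; split; first exact: valid_for_mulmx fg.
exists d; split; [apply: has_affdim_mulmx dimP | apply: has_affdim_mulmx dimF].
  by move=> z; rewrite conv_mulmx.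
by move=> z /=; rewrite conv_mulmx ff' gg'.
Qed.

End LinearSymmetry.

Ltac decide_ifs :=
  repeat match goal with |- context [if ?c then _ else _] =>
    first [ rewrite (_ : c = true); last by lia
          | rewrite (_ : c = false); last by apply/negbTE/negP; lia ] end.

Section Points.
Variables (R : realType) (T : nat).
Implicit Types (X Y : nat -> R) (z : 'rV[R]_(T + T)).

Definition mkpt X Y : 'rV[R]_(T + T) :=
  row_mx (\row_(i < T) X i.+1) (\row_(i < T) Y i.+1).

Lemma xc_mkpt X Y j : (1 <= j <= T)%N -> xc T (mkpt X Y) j = X j.
Proof.
move=> j_in; rewrite /xc /ent insubT /=; first lia.
move=> lt_j; have lt_jT : (j.-1 < T)%N by lia.
have -> : Sub j.-1 lt_j = lshift T (Ordinal lt_jT) by apply: val_inj.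
by rewrite row_mxEl mxE prednK //; lia.
Qed.

Lemma yc_mkpt X Y j : (1 <= j <= T)%N -> yc T (mkpt X Y) j = Y j.
Proof.
move=> j_in; rewrite /yc /ent insubT /=; first lia.
move=> lt_j; have lt_jT : (j.-1 < T)%N by lia.
have -> : Sub (T + j.-1) lt_j = rshift T (Ordinal lt_jT) by apply: val_inj.
by rewrite row_mxEr mxE prednK //; lia.
Qed.

Lemma mkpt_ext X1 Y1 X2 Y2 :
  (forall j, (1 <= j <= T)%N -> X1 j = X2 j) ->
  (forall j, (1 <= j <= T)%N -> Y1 j = Y2 j) -> mkpt X1 Y1 = mkpt X2 Y2.
Proof.
move=> eqX eqY; congr row_mx; apply/rowP => i; rewrite !mxE;
  [apply: eqX | apply: eqY]; have := ltn_ord i; lia.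
Qed.

Lemma mkptD X1 Y1 X2 Y2 :
  mkpt X1 Y1 + mkpt X2 Y2 = mkpt (fun j => X1 j + X2 j) (fun j => Y1 j + Y2 j).
Proof. by rewrite add_row_mx; congr row_mx; apply/rowP => i; rewrite !mxE. Qed.

Lemma mkptZ a X Y : a *: mkpt X Y = mkpt (fun j => a * X j) (fun j => a * Y j).
Proof. by rewrite scale_row_mx; congr row_mx; apply/rowP => i; rewrite !mxE. Qed.

Lemma mkptB X1 Y1 X2 Y2 :
  mkpt X1 Y1 - mkpt X2 Y2 = mkpt (fun j => X1 j - X2 j) (fun j => Y1 j - Y2 j).
Proof.
rewrite -scaleN1r mkptZ addrC mkptD.
by apply: mkpt_ext => j _; rewrite mulN1r addrC.
Qed.

Lemma scalar_ent k : scalar (fun z : 'rV[R]_(T + T) => ent z k).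
Proof.
move=> a u v; rewrite /ent; case: insubP => [i _ _|_] /=; first by rewrite !mxE.
by rewrite mulr0 addr0.
Qed.

Lemma scalar_xc t : scalar (fun z => xc T z t).
Proof. exact: scalar_ent. Qed.

Lemma scalar_yc t : scalar (fun z => yc T z t).
Proof. exact: scalar_ent. Qed.

Definition ind k1 k2 j : R := if (k1 <= j < k2)%N then 1 else 0.

Lemma ind_succ_diff k j :
  (j <= T)%N -> ind k T.+1 j - ind k.+1 T.+1 j = (j == k)%:R.
Proof.
by rewrite /ind; case: (ltngtP j k) => [jk|kj|->] jT; decide_ifs; rewrite ?subrr ?subr0.
Qed.

Lemma ind_cat k1 k2 k3 j :
  (k1 <= k2 <= k3)%N -> ind k1 k3 j = ind k1 k2 j + ind k2 k3 j.
Proof.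
rewrite /ind => k_le.
case: (leqP k1 j) => ?; case: (leqP k2 j) => ?; case: (leqP k3 j) => ?;
  decide_ifs; rewrite ?addr0 ?add0r //; exfalso; lia.
Qed.

Definition exv j := mkpt (fun i => (i == j)%:R) (fun=> 0).

Lemma exv_delta (i : 'I_T) : delta_mx 0 (lshift T i) = exv i.+1.
Proof.
apply/rowP => c; rewrite -(splitK c); case: (split c) => j /=.
  by rewrite mxE row_mxEl mxE eq_lshift eqSS.
by rewrite mxE row_mxEr mxE eq_rlshift.
Qed.

Lemma xc_exv j : (1 <= j <= T)%N -> xc T (exv j) j = 1.
Proof. by move=> j_in; rewrite xc_mkpt // eqxx. Qed.

Lemma yc_exv j k : yc T (exv j) k = 0.
Proof.
rewrite /yc /ent; case: insubP => [c _ /= c_val|] //=.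
have {}c_val : nat_of_ord c = (T + k.-1)%N by [].
have lt_c : (c - T < T)%N by have := ltn_ord c; lia.
have -> : c = rshift T (Ordinal lt_c) by apply: val_inj => /=; lia.
by rewrite row_mxEr mxE.
Qed.

Lemma mkpt_x_sub m (B : 'M[R]_(m, T + T)) X :
  (forall j, (1 <= j <= T)%N -> (exv j <= B)%MS) -> (mkpt X (fun=> 0) <= B)%MS.
Proof.
move=> exvB.
have -> : mkpt X (fun=> 0) = \sum_(j < T) X j.+1 *: exv j.+1.
  apply/rowP => c; rewrite summxE -(splitK c); case: (split c) => i /=.
    rewrite row_mxEl mxE (bigD1 i) //= big1 => [|j ji].
      by rewrite mxE /exv /mkpt row_mxEl mxE eqxx mulr1 addr0.
    rewrite mxE /exv /mkpt row_mxEl mxE eqSS (inj_eq val_inj) eq_sym.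
    by rewrite (negbTE ji) mulr0.
  by rewrite row_mxEr mxE big1 // => j _; rewrite mxE /exv /mkpt row_mxEr mxE mulr0.
by apply: summx_sub => j _; apply/scalemx_sub/exvB; have := ltn_ord j; lia.
Qed.

Lemma mkpt_y_sub m (B : 'M[R]_(m, T + T)) X Y :
  (forall j, (1 <= j <= T)%N -> (exv j <= B)%MS) ->
  (mkpt X Y <= B)%MS -> (mkpt (fun=> 0) Y <= B)%MS.
Proof.
move=> exvB XYB; have := addmx_sub XYB (scalemx_sub (-1) (mkpt_x_sub X exvB)).
by rewrite mkptZ mkptD; congr (_ <= _)%MS; apply: mkpt_ext => j _; ring.
Qed.

Lemma mkpt_y_subD m (B : 'M[R]_(m, T + T)) (a : R) Y1 Y2 :
  (mkpt (fun=> 0) Y1 <= B)%MS -> (mkpt (fun=> 0) Y2 <= B)%MS ->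
  (mkpt (fun=> 0) (fun j => (a * Y1 j + Y2 j)%R) <= B)%MS.
Proof.
move=> Y1B Y2B; have := addmx_sub (scalemx_sub a Y1B) Y2B.
by rewrite mkptZ mkptD; congr (_ <= _)%MS; apply: mkpt_ext => j _; ring.
Qed.

Lemma sub1mx_mkpt m (B : 'M[R]_(m, T + T)) :
  (forall j, (1 <= j <= T)%N -> (exv j <= B)%MS) ->
  (forall k, (1 <= k <= T)%N -> (mkpt (fun=> 0) (ind k T.+1) <= B)%MS) ->
  (1%:M <= B)%MS.
Proof.
move=> exvB indB.
have {}indB k : (1 <= k <= T.+1)%N -> (mkpt (fun=> 0) (ind k T.+1) <= B)%MS.
  case: (ltnP k T.+1) => [kT k_in|kT _]; first by apply: indB; lia.
  have -> : mkpt (fun=> 0) (ind k T.+1) = 0; last exact: sub0mx.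
  apply/rowP => c; rewrite [RHS]mxE -(splitK c); case: (split c) => j /=;
    rewrite ?row_mxEl ?row_mxEr mxE // /ind; have := ltn_ord j; by decide_ifs.
apply/row_subP => c; rewrite row1 -(splitK c).
case: (split c) => i /=.
  by rewrite exv_delta; apply: exvB; have := ltn_ord i; lia.
have -> : delta_mx 0 (rshift T i) =
    mkpt (fun=> 0) (ind i.+1 T.+1) - mkpt (fun=> 0) (ind i.+2 T.+1).
  rewrite mkptB; apply/rowP => c'; rewrite -(splitK c'); case: (split c') => j /=.
    by rewrite mxE row_mxEl !mxE eq_lrshift subrr.
  rewrite mxE row_mxEr !mxE eq_rshift eqxx -(inj_eq val_inj) /=.
  by rewrite ind_succ_diff ?eqSS //; have := ltn_ord j; lia.
have lt_i := ltn_ord i.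
by apply: addmx_sub; [|rewrite -scaleN1r; apply: scalemx_sub]; apply: indB; lia.
Qed.

End Points.

Arguments ind {R} k1 k2 j.
Arguments exv {R T} j.

Lemma min_up_rev (R : realType) (T L : nat) (y : nat -> R) :
  (forall t, (1 <= t <= T)%N -> y t = 0 \/ y t = 1) ->
  (forall t k, (2 <= t <= T)%N -> (t <= k <= minn T (t + L - 1))%N ->
     - y t.-1 + y t - y k <= 0) ->
  forall t k, (2 <= t <= T)%N -> (t <= k <= minn T (t + L - 1))%N ->
    - y (T.+1 - t.-1)%N + y (T.+1 - t)%N - y (T.+1 - k)%N <= 0.
Proof.
move=> y01 up t k t_in k_in.
have -> : (T.+1 - t.-1 = (T.+1 - t).+1)%N by lia.
set u := (T.+1 - t)%N; set w := (T.+1 - k)%N.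
have [u_in w_in uw_L] : [/\ (1 <= u < T)%N, (1 <= w <= u)%N & (u - w < L)%N].
  by rewrite /u /w; split; lia.
clearbody u w.
have y_w := y01 w ltac:(lia); have y_u := y01 u ltac:(lia).
have y_u1 := y01 u.+1 ltac:(lia).
case: y_w => [yw0|->]; last by lra.
case: y_u1 => [yu0|->]; last by lra.
case: y_u => [->|yu1]; first by lra.
suff run d : (d <= u - w)%N -> y (u - d)%N = 1.
  by have := run (u - w)%N (leqnn _); rewrite (_ : u - (u - w) = w)%N; [lra | lia].
elim: d => [_|d IHd d_lt]; first by rewrite subn0.
have [ypre|//] := y01 (u - d.+1)%N ltac:(lia).
have := up (u - d)%N u.+1 ltac:(lia) ltac:(lia).
rewrite (_ : (u - d).-1 = u - d.+1)%N; last lia.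
by rewrite ypre IHd ?yu0; [lra | lia].
Qed.

Section TimeReversal.
Variables (R : realType) (T : nat).

Definition rev_half (c : 'I_(T + T)) : 'I_(T + T) :=
  unsplit (match split c with
           | inl i => inl (rev_ord i) | inr i => inr (rev_ord i) end).

Lemma rev_halfK : involutive rev_half.
Proof.
move=> c; rewrite /rev_half unsplitK -[RHS]splitK.
by case: (split c) => i /=; rewrite rev_ordK.
Qed.

Definition revmx : 'M[R]_(T + T) := perm_mx (perm (can_inj rev_halfK)).

Lemma revmxK : revmx *m revmx = 1%:M.
Proof.
rewrite -perm_mxM -perm_mx1; congr perm_mx.
by apply/permP => c; rewrite permM !permE rev_halfK.
Qed.

Lemma mulmx_revmx (z : 'rV[R]_(T + T)) :
  z *m revmx = mkpt T (fun j => xc T z (T.+1 - j)) (fun j => yc T z (T.+1 - j)).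
Proof.
rewrite /revmx; set s := perm (can_inj rev_halfK).
have sV c : (s^-1)%g c = rev_half c.
  by apply: (@perm_inj _ s); rewrite permKV !permE rev_halfK.
rewrite -[s]invgK -col_permE; apply/rowP => c; rewrite mxE sV.
rewrite /rev_half -[c]splitK unsplitK; case: (split c) => i /=.
  rewrite row_mxEl mxE /xc /ent insubT /=; first by have := ltn_ord i; lia.
  by move=> lt_i; congr (z 0 _); apply: val_inj => /=; lia.
rewrite row_mxEr mxE /yc /ent insubT /=; first by have := ltn_ord i; lia.
by move=> lt_i; congr (z 0 _); apply: val_inj => /=; lia.
Qed.

Lemma xc_revmx z t : (1 <= t <= T)%N -> xc T (z *m revmx) t = xc T z (T.+1 - t).
Proof. by move=> t_in; rewrite mulmx_revmx xc_mkpt. Qed.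

Lemma yc_revmx z t : (1 <= t <= T)%N -> yc T (z *m revmx) t = yc T z (T.+1 - t).
Proof. by move=> t_in; rewrite mulmx_revmx yc_mkpt. Qed.

Lemma inP_revmx L ell (Cb Cu V Vb : R) z :
  inP T L ell Cb Cu V Vb z -> inP T L ell Cb Cu V Vb (z *m revmx).
Proof.
case=> [x_ge0 [y01 [up [down [cap [ramp_up ramp_down]]]]]].
have xE := xc_revmx z; have yE := yc_revmx z.
have predE t : (2 <= t <= T)%N -> (T.+1 - t.-1 = (T.+1 - t).+1)%N by lia.
split; [|split; [|split; [|split; [|split; [|split]]]]].
- by move=> t t_in; rewrite xE //; apply: x_ge0; lia.
- by move=> t t_in; rewrite yE //; apply: y01; lia.
- move=> t k t_in k_in; rewrite !yE; try lia.
  by apply: (min_up_rev (y := yc T z) y01 up).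
- move=> t k t_in k_in; rewrite !yE; try lia.
  suff : - (1 - yc T z (T.+1 - t.-1)) + (1 - yc T z (T.+1 - t))
         - (1 - yc T z (T.+1 - k)) <= 0 by lra.
  apply: (min_up_rev (y := fun j => 1 - yc T z j) _ _ t_in k_in).
    move=> j j_in.
    by case: (y01 j j_in) => ->; [right|left]; ring.
  move=> t' k' t'_in k'_in.
  by have := down t' k' t'_in k'_in; lra.
- by move=> t t_in; rewrite xE ?yE //; apply: cap; lia.
- move=> t t_in; rewrite !xE ?yE ?predE; try lia.
  by have := ramp_down (T.+1 - t).+1 ltac:(lia).
- move=> t t_in; rewrite !xE ?yE ?predE; try lia.
  by have := ramp_up (T.+1 - t).+1 ltac:(lia).
Qed.

End TimeReversal.

Arguments revmx {R T}.

Section StarSequence.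
Variables (R : realType) (n L : nat) (Cb Vb V eta : R) (S : pred nat).
Variables (X Y : nat -> R).
Hypotheses (Y01 : forall k, (k <= n.+1)%N -> Y k = 0 \/ Y k = 1)
  (X_cap : forall k, (k <= n.+1)%N -> X k <= Cb * Y k)
  (X_ramp : forall k, (k <= n)%N -> X k <= X k.+1 + V * Y k.+1 + Vb * (1 - Y k.+1))
  (Y_run : forall k a, (k < a <= n)%N -> Y k = 0 ->
     (forall j, (k < j <= a)%N -> Y j = 1) -> Y a.+1 = 0 -> (k + L <= a)%N)
  (S_range : forall s, S s -> (1 <= s <= n)%N)
  (S_closed : forall b a, (1 <= b)%N -> (b + L <= a)%N -> S a -> S b)
  (L_le : (L <= n)%N) (V_gt0 : 0 < V) (Cb_ge : Vb + n%:R * V <= Cb)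
  (eta_ge0 : 0 <= eta) (eta_le : eta <= L%:R).

Let c s : R := Cb - Vb - s%:R * V.
Let H k := \sum_(k <= s < n.+1 | S s) c s * (Y s - Y s.+1).

Let c_anti a b : (a <= b)%N -> c b <= c a.
Proof.
by move=> ab; rewrite /c lerD2l lerN2 ler_wpM2r ?ler_nat // ltW.
Qed.

Let c_ge0 a : (a <= n)%N -> 0 <= c a.
Proof. move=> an; apply: le_trans (c_anti an); by rewrite /c -addrA -opprD subr_ge0. Qed.

Let H_rec k : (k <= n)%N -> H k = (if S k then c k * (Y k - Y k.+1) else 0) + H k.+1.
Proof. by move=> kn; rewrite /H big_ltn_cond //; case: (S k); rewrite ?add0r. Qed.

(* An on-run [k..a] followed by an off period contributes at most [c a]. *)
Lemma tail_sum_bound k : (1 <= k <= n.+1)%N ->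
  (Y k = 0 -> H k <= 0) /\
  (Y k = 1 -> H k <= 0 \/ exists a, [/\ (k <= a <= n)%N, S a,
      (forall j, (k <= j <= a)%N -> Y j = 1), Y a.+1 = 0 & H k <= c a]).
Proof.
move=> /andP[k_ge1 k_le]; move: {2}(n.+1 - k)%N (erefl (n.+1 - k)%N) => d.
elim: d k k_ge1 k_le => [|d IHd] k k_ge1 k_le dE.
  have -> : H k = 0 by rewrite /H big_geq //; lia.
  by split=> _ //; left.
have kn : (k <= n)%N by lia.
have [IH0 IH1] := IHd k.+1 ltac:(lia) ltac:(lia) ltac:(lia).
rewrite H_rec //; split=> Yk.
- have [Yk1|Yk1] := @Y01 k.+1 ltac:(lia).
    by rewrite Yk Yk1 subrr mulr0 if_same add0r; exact: IH0.
  case: (IH1 Yk1) => [H_le|[a [a_in Sa run Ya1 H_le]]].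
    by rewrite Yk Yk1; case: (S k); have := c_ge0 kn; nra.
  have kLa : (k + L <= a)%N.
    exact: (Y_run (k := k) (a := a)).
  rewrite (S_closed k_ge1 kLa Sa) Yk Yk1.
  by have := c_anti (a := k) (b := a) ltac:(lia); lra.
- have [Yk1|Yk1] := @Y01 k.+1 ltac:(lia).
    case Sk: (S k); last by left; rewrite add0r; exact: IH0.
    right; exists k; split; rewrite ?leqnn //.
      by move=> j j_in; rewrite (_ : j = k) //; lia.
    by rewrite Yk Yk1 subr0 mulr1; have := IH0 Yk1; lra.
  rewrite Yk Yk1 subrr mulr0 if_same add0r.
  case: (IH1 Yk1) => [H_le|[a [a_in Sa run Ya1 H_le]]]; first by left.
  right; exists a; split=> //; first by lia.
  move=> j j_in; case: (ltngtP j k) => [|jk|->] //; first by lia.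
  by apply: run; lia.
Qed.

Lemma ramp_bound a : (a <= n)%N -> (forall j, (1 <= j <= a)%N -> Y j = 1) ->
  Y a.+1 = 0 -> X 0 <= Vb + a%:R * V.
Proof.
move=> an run Ya1.
suff ramp i : (i <= a)%N -> X (a - i)%N <= Vb + i%:R * V.
  by have := ramp a (leqnn a); rewrite subnn.
elim: i => [_|i IHi ia].
  rewrite subn0 mul0r addr0; have := X_ramp an; have := @X_cap a.+1 ltac:(lia).
  by rewrite Ya1; lra.
have := @X_ramp (a - i.+1)%N ltac:(lia); rewrite (_ : (a - i.+1).+1 = a - i)%N; last lia.
have := IHi ltac:(lia); have -> : Y (a - i)%N = 1 by apply: run; lia.
by rewrite -addn1 natrD; lra.
Qed.

Lemma star_bound_seq :
  X 0 <= (Vb + eta * V) * Y 0 + (Cb - Vb - eta * V) * Y 1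
         - \sum_(0 <= s < n.+1 | S s) (Cb - Vb - s%:R * V) * (Y s - Y s.+1).
Proof.
have [H1_0 H1_1] := @tail_sum_bound 1 ltac:(lia).
have -> : \sum_(0 <= s < n.+1 | S s) (Cb - Vb - s%:R * V) * (Y s - Y s.+1) = H 1.
  rewrite /H big_ltn_cond // ifF //; apply/negbTE/negP => /S_range; lia.
have eta_le_a a : (L <= a)%N -> eta * V <= a%:R * V.
  move=> La; rewrite ler_pM2r //.
  have := eta_le; have : L%:R <= a%:R :> R by rewrite ler_nat.
  lra.
have etaV : eta * V <= Cb - Vb by have := eta_le_a n L_le; have := Cb_ge; lra.
have etaV0 : 0 <= eta * V by rewrite mulr_ge0 // ltW.
have [Y0|Y0] := @Y01 0 isT; have [Y1|Y1] := @Y01 1 isT; rewrite Y0 Y1.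
- by have := H1_0 Y1; have := @X_cap 0 isT; rewrite Y0; lra.
- case: (H1_1 Y1) => [H_le|[a [a_in Sa run Ya1 H_le]]].
    by have := @X_cap 0 isT; rewrite Y0; lra.
  have La : (L <= a)%N.
    by have := Y_run (k := 0) (a := a) ltac:(lia) Y0 run Ya1.
  rewrite /c in H_le; have := eta_le_a a La; have := @X_cap 0 isT.
  by rewrite Y0; lra.
- have := @X_ramp 0 isT; have := @X_cap 1 isT; have := H1_0 Y1.
  by rewrite Y1; lra.
- case: (H1_1 Y1) => [H_le|[a [a_in Sa run Ya1 H_le]]].
    by have := @X_cap 0 isT; rewrite Y0; lra.
  have := ramp_bound (a := a) ltac:(lia) ltac:(by move=> j j_in; apply: run; lia) Ya1.
  by rewrite /c in H_le; lra.
Qed.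

End StarSequence.

Definition star_rhs (R : realType) (T : nat) (Cb Vb V eta : R) (al be sm t : nat)
    (z : 'rV[R]_(T + T)) : R :=
  (Vb + eta * V) * yc T z t + (Cb - Vb - eta * V) * yc T z (t - 1)
  - \sum_(0 <= s < sm.+1 | inS al be sm s)
      (Cb - Vb - s%:R * V) * (yc T z (t - s) - yc T z (t - s - 1)).

Definition star2_rhs (R : realType) (T : nat) (Cb Vb V eta : R) (al be sm t : nat)
    (z : 'rV[R]_(T + T)) : R :=
  (Vb + eta * V) * yc T z t + (Cb - Vb - eta * V) * yc T z (t + 1)
  - \sum_(0 <= s < sm.+1 | inS al be sm s)
      (Cb - Vb - s%:R * V) * (yc T z (t + s) - yc T z (t + s + 1)).

Lemma inS_range al be sm s :
  (al < be <= sm)%N -> inS al be sm s -> (1 <= s <= sm)%N.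
Proof. by rewrite /inS => be_sm /orP[] /andP[]; lia. Qed.

Lemma inS_closed L al be sm b a :
  (al < be)%N -> (be = al + 1 \/ sm <= L + al)%N ->
  (1 <= b)%N -> (b + L <= a)%N -> inS al be sm a -> inS al be sm b.
Proof.
rewrite /inS => al_be gap b_ge1 ba /orP[] /andP[a_ge a_le]; apply/orP.
  by left; lia.
by case: gap => gap; case: (leqP b al) => b_al; [left | right | left | left]; lia.
Qed.

Section StarInequality.
Variables (R : realType) (T : nat) (Cb Vb V eta : R) (al be sm : nat).
Local Notation star t := (@star_rhs R T Cb Vb V eta al be sm t).

Lemma scalar_star_rhs t : scalar (star t).
Proof.
move=> a u v; have E (c u1 u2 v1 v2 : R) :
    c * ((a * u1 + v1) - (a * u2 + v2)) = a * (c * (u1 - u2)) + c * (v1 - v2).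
  by ring.
rewrite /star_rhs !scalar_yc; under eq_bigr => s _ do rewrite !scalar_yc E.
by rewrite big_split -mulr_sumr /=; ring.
Qed.

Lemma star2_rhs_revmx t z : (1 <= t)%N -> (t + sm + 1 <= T)%N ->
  @star2_rhs R T Cb Vb V eta al be sm t z = star (T.+1 - t) (z *m revmx).
Proof.
move=> t_ge1 t_le; rewrite /star_rhs /star2_rhs !(yc_revmx z); try lia.
congr (_ * yc T z _ + _ * yc T z _ - _); try lia.
apply: congr_big_nat => // s /andP[_ /andP[_ s_le]].
by rewrite !(yc_revmx z); try lia; congr (_ * (yc T z _ - yc T z _)); lia.
Qed.

Variables (L ell : nat) (Cu : R).
Hypotheses (al_be : (al < be <= sm)%N) (S_gap : (be = al + 1 \/ sm <= L + al)%N)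
  (L_sm : (L <= sm)%N) (V_gt0 : 0 < V) (Cb_ge : Vb + sm%:R * V <= Cb)
  (eta_ge0 : 0 <= eta) (eta_le : eta <= L%:R).

Lemma star_valid_inP t z : (sm + 2 <= t <= T)%N ->
  inP T L ell Cb Cu V Vb z -> xc T z t <= star t z.
Proof.
move=> t_in [_ [y01 [up [_ [cap [ramp _]]]]]].
have := @star_bound_seq R sm L Cb Vb V eta (inS al be sm)
  (fun k => xc T z (t - k)) (fun k => yc T z (t - k)).
rewrite subn0 => /(_ _ _ _ _ _ _ L_sm V_gt0 Cb_ge eta_ge0 eta_le) bound.
apply: le_trans (bound _ _ _ _ _ _) _.
- by move=> k k_le; apply: y01; lia.
- by move=> k k_le; have := (cap (t - k)%N ltac:(lia)).2; lra.
- move=> k k_le; have := ramp (t - k)%N ltac:(lia).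
  by rewrite (_ : (t - k).-1 = t - k.+1)%N; [lra | lia].
- move=> k a ka Yk run Ya1; case: (leqP (k + L) a) => // aL; exfalso.
  have := up (t - a)%N (t - k)%N ltac:(lia) ltac:(lia).
  rewrite (_ : (t - a).-1 = t - a.+1)%N; last lia.
  by rewrite Yk Ya1 run; [lra | lia].
- by move=> s; apply: inS_range.
- by move=> b a; apply: inS_closed; case/andP: al_be.
rewrite /star_rhs lerD2l lerN2 le_eqVlt; apply/orP; left; apply/eqP.
by apply: eq_bigr => s _; congr (_ * (_ - yc T z _)); lia.
Qed.

End StarInequality.


Section Schedules.
Variables (R : realType) (T L ell : nat) (Cb Cu V Vb : R).
Local Notation P := (inP T L ell Cb Cu V Vb).

Lemma inP_interval k1 k2 (X : nat -> R) :
  (k1 <= 1 \/ k1 + L <= k2 \/ T + 1 <= k2)%N -> 0 <= Cu ->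
  (forall j, (1 <= j <= T)%N -> ((k1 <= j < k2)%N -> Cu <= X j <= Cb) /\
                                ((k1 <= j < k2)%N = false -> X j = 0)) ->
  (forall j, (2 <= j <= T)%N ->
     X j - X j.-1 <= V * ind k1 k2 j.-1 + Vb * (1 - ind k1 k2 j.-1)) ->
  (forall j, (2 <= j <= T)%N -> X j.-1 - X j <= V * ind k1 k2 j + Vb * (1 - ind k1 k2 j)) ->
  P (mkpt T X (ind k1 k2)).
Proof.
move=> k_run Cu_ge0 X_in ramp_up ramp_down.
have xE j : (1 <= j <= T)%N -> xc T (mkpt T X (ind k1 k2)) j = X j by exact: xc_mkpt.
have yE j : (1 <= j <= T)%N -> yc T (mkpt T X (ind k1 k2)) j = ind k1 k2 j by exact: yc_mkpt.
split; [|split; [|split; [|split; [|split; [|split]]]]].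
- move=> j j_in; rewrite xE //; have [X_on X_off] := X_in j j_in.
  by case: (boolP (k1 <= j < k2)%N) => [/X_on|/negbTE/X_off ->]; lra.
- by move=> j j_in; rewrite yE // /ind; case: ifP; [right | left].
- move=> j k j_in k_in; rewrite !yE; try lia.
  by rewrite /ind; case: ifP => ?; case: ifP => ?; case: ifP => ?; try lra; lia.
- move=> j k j_in k_in; rewrite !yE; try lia.
  by rewrite /ind; case: ifP => ?; case: ifP => ?; case: ifP => ?; try lra; lia.
- move=> j j_in; rewrite xE ?yE //; have [X_on X_off] := X_in j j_in.
  by rewrite /ind; case: ifP => [/X_on|/X_off ->]; lra.
- by move=> j j_in; rewrite !xE ?yE; try lia; exact: ramp_up.
- by move=> j j_in; rewrite !xE ?yE; try lia; exact: ramp_down.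
Qed.


Definition full_on : 'rV[R]_(T + T) := mkpt T (fun=> Cb) (ind 1 T.+1).
Definition dip j : 'rV[R]_(T + T) := mkpt T (fun i => Cb - V * (i == j)%:R) (ind 1 T.+1).
Definition flat k1 k2 : 'rV[R]_(T + T) := mkpt T (fun j => Cu * ind k1 k2 j) (ind k1 k2).
Definition startup k : 'rV[R]_(T + T) :=
  mkpt T (fun j => if (k <= j)%N then Num.min Cb (Vb + (j - k)%:R * V) else 0) (ind k T.+1).

Lemma flat_nil k : flat k k = 0.
Proof.
apply/rowP => c; rewrite /flat /mkpt [RHS]mxE -(splitK c); case: (split c) => j /=;
  by rewrite ?row_mxEl ?row_mxEr mxE /ind; decide_ifs; rewrite ?mulr0.
Qed.

Hypotheses (Cu_gt0 : 0 < Cu) (Cu_Vb : Cu < Vb) (V_gt0 : 0 < V) (Vb_V : Vb + V <= Cb).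

Lemma inP_flat k1 k2 : (k1 <= 1 \/ k1 + L <= k2 \/ T + 1 <= k2)%N -> P (flat k1 k2).
Proof.
move=> k_run; have := Cu_gt0; have := Cu_Vb; have := Vb_V; have := V_gt0.
move=> *; apply: inP_interval => //.
- exact: ltW.
- by move=> j j_in; rewrite /ind; split=> [->|->]; lra.
- by move=> j j_in; rewrite /ind; case: ifP; case: ifP; lra.
- by move=> j j_in; rewrite /ind; case: ifP; case: ifP; lra.
Qed.

Lemma inP_always_on (X : nat -> R) : (forall j, Cu <= X j <= Cb) ->
  (forall j, X j - X j.+1 <= V /\ X j.+1 - X j <= V) -> P (mkpt T X (ind 1 T.+1)).
Proof.
move=> X_in X_ramp; apply: inP_interval; first by left.
- exact: ltW.
- by move=> j j_in; split=> // /negbT; lia.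
- move=> j j_in; rewrite /ind ifT; last lia.
  by have := X_ramp j.-1; rewrite prednK; [lra | lia].
- move=> j j_in; rewrite /ind ifT; last lia.
  by have := X_ramp j.-1; rewrite prednK; [lra | lia].
Qed.

Lemma inP_full_on : P full_on.
Proof.
have := Cu_Vb; have := Vb_V; have := V_gt0 => *.
by apply: inP_always_on => j; [apply/andP | ]; split; lra.
Qed.

Lemma inP_dip j : P (dip j).
Proof.
have := Cu_Vb; have := Vb_V; have := V_gt0 => *.
by apply: inP_always_on => i; [apply/andP | ]; case: (i == j); case: (i.+1 == j);
  rewrite /= ?mulr1n ?mulr0n ?mulr1 ?mulr0; split; lra.
Qed.

Lemma inP_startup k : (1 <= k)%N -> P (startup k).
Proof.
move=> k_ge1; have := Cu_gt0; have := Cu_Vb; have := Vb_V; have := V_gt0 => *.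
have lvl_ge j : 0 <= (j - k)%:R * V by rewrite mulr_ge0 // ltW.
have lvlS j : (k <= j)%N -> ((j.+1 - k)%:R * V = (j - k)%:R * V + V).
  by move=> kj; rewrite subSn // mulrSr mulrDl mul1r.
apply: inP_interval; [by right; right; lia | exact: ltW | | |].
- move=> j j_in; split=> [kj|/negbT kj]; last by rewrite ifF //; apply/negbTE; lia.
  by rewrite ifT; [have := lvl_ge j; rewrite minEle; case: ifP; lra | lia].
- move=> j j_in; rewrite /ind; have := lvl_ge j.-1.
  case: (leqP k j.-1) => kj; decide_ifs.
    by rewrite -{1 2}(prednK (_ : 0 < j)%N) ?lvlS //; try lia; rewrite !minEle; do 2 case: ifP; lra.
  case: (leqP k j) => kj'; decide_ifs; last lra.
  by rewrite (_ : j - k = 0)%N ?mul0r ?addr0 ?minEle; [case: ifP; lra | lia].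
- move=> j j_in; rewrite /ind; have := lvl_ge j.-1.
  case: (leqP k j.-1) => kj; decide_ifs.
    by rewrite -{1 3}(prednK (_ : 0 < j)%N) ?lvlS //; try lia; rewrite !minEle; do 2 case: ifP; lra.
  case: (leqP k j) => kj'; decide_ifs; last lra.
  by rewrite (_ : j - k = 0)%N ?mul0r ?addr0 ?minEle; [case: ifP; lra | lia].
Qed.

Lemma exv_full_on_dip j : exv j = V^-1 *: (full_on - dip j).
Proof.
rewrite /full_on /dip mkptB mkptZ /exv; apply: mkpt_ext => i _; last by ring.
by have := V_gt0; move=> ?; field; lra.
Qed.

Definition full_dim_pts : seq 'rV[R]_(T + T) :=
  full_on :: [seq dip j | j <- iota 1 T] ++ [seq flat k T.+1 | k <- iota 1 T].

Lemma full_dim_pts_inP q : q \in 0 :: full_dim_pts -> P q.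
Proof.
rewrite !inE mem_cat => /or4P[/eqP-> | /eqP-> | /mapP[j _ ->] | /mapP[k _ ->]].
- by rewrite -(flat_nil T.+1); apply: inP_flat; right; right; rewrite addn1.
- exact: inP_full_on.
- exact: inP_dip.
- by apply: inP_flat; right; right; rewrite addn1.
Qed.

Lemma rank_full_dim_pts : \rank (Defs.diffmx (origin_pts full_dim_pts)) = (T + T)%N.
Proof.
apply/eqP; rewrite eqn_leq rank_leq_col -{1}(mxrank1 R (T + T)) mxrankS //.
have memB q : q \in full_dim_pts -> (q <= Defs.diffmx (origin_pts full_dim_pts))%MS.
  exact: origin_pts_sub.
have exvB j : (1 <= j <= T)%N -> (exv j <= Defs.diffmx (origin_pts full_dim_pts))%MS.
  move=> j_in; rewrite exv_full_on_dip; apply/scalemx_sub/addmx_sub; first exact/memB/mem_head.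
  rewrite -scaleN1r; apply/scalemx_sub/memB.
  by rewrite inE mem_cat (map_f (dip)) ?orbT // mem_iota; lia.
apply: (sub1mx_mkpt exvB) => k k_in; apply: (mkpt_y_sub exvB (memB (flat k T.+1) _)).
by rewrite inE mem_cat (map_f (fun k => flat k T.+1)) ?orbT // mem_iota; lia.
Qed.

End Schedules.

Section StarOnIntervals.
Variables (R : realType) (T : nat) (Cb Vb V eta : R) (al be sm : nat).
Local Notation star t := (@star_rhs R T Cb Vb V eta al be sm t).
Local Notation S := (inS al be sm).
Hypothesis al_be : (al < be <= sm)%N.

Lemma sum_inS_pick (F : nat -> R) a :
  \sum_(0 <= s < sm.+1 | S s) F s * (s == a)%:R = if S a then F a else 0.
Proof.
case Sa: (S a); last first.
  by apply: big1 => s Ss; case: eqP => [sa|_]; [rewrite sa Sa in Ss | rewrite mulr0].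
have a_le := inS_range al_be Sa.
rewrite big_mkcond (bigD1_seq a) ?iota_uniq ?mem_index_iota /=; try lia.
rewrite Sa eqxx mulr1 big1 ?addr0 // => s sa.
by rewrite (negbTE sa) mulr0 if_same.
Qed.

Lemma star_rhs_interval t k1 k2 (X : nat -> R) :
  (sm + 2 <= t <= T)%N -> (k1 <= k2)%N ->
  star t (mkpt T X (ind k1 k2)) =
    (Vb + eta * V) * ind k1 k2 t + (Cb - Vb - eta * V) * ind k1 k2 (t - 1)
    - ((if S (t - k1) then Cb - Vb - (t - k1)%:R * V else 0)
       - (if S (t - k2) then Cb - Vb - (t - k2)%:R * V else 0)).
Proof.
move=> t_in k12; rewrite /star_rhs !yc_mkpt; try lia.
rewrite -!(sum_inS_pick (fun s => Cb - Vb - s%:R * V)) -sumrB; congr (_ - _); apply: eq_bigr => s Ss.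
have s_le := inS_range al_be Ss; rewrite !yc_mkpt; try lia.
rewrite -mulrBr; congr (_ * _); rewrite /ind.
case: (boolP (k1 <= t - s < k2)%N) => ?; case: (boolP (k1 <= t - s - 1 < k2)%N) => ?;
  case: (eqVneq s (t - k1)%N) => ?; case: (eqVneq s (t - k2)%N) => ?;
  rewrite /= ?mulr1n ?mulr0n ?subrr ?subr0 ?sub0r //; exfalso; lia.
Qed.

End StarOnIntervals.

Section StarFace.
Variables (R : realType) (T L ell : nat) (Cb Cu V Vb eta : R) (al be sm t : nat).
Local Notation P := (inP T L ell Cb Cu V Vb).
Local Notation star := (@star_rhs R T Cb Vb V eta al be sm t).
Local Notation S := (inS al be sm).
Hypotheses (Cu_gt0 : 0 < Cu) (Cu_Vb : Cu < Vb) (V_gt0 : 0 < V) (Vb_V : Vb + V <= Cb)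
  (Cb_ge : Vb + sm%:R * V <= Cb) (L_gt0 : (0 < L)%N) (L_sm : (L < sm)%N)
  (al_be : (al < be <= sm)%N) (t_in : (sm + 2 <= t <= T)%N).

Definition on_face q := P q /\ xc T q t = star q.

Let S_out s : (s == 0)%N || (sm < s)%N -> S s = false.
Proof. by move=> s_out; apply/negP => /(inS_range al_be); lia. Qed.

Lemma on_face_full_on : on_face (full_on T Cb).
Proof.
split; first exact: inP_full_on.
rewrite /full_on xc_mkpt ?star_rhs_interval ?S_out //; try lia.
by rewrite /ind; decide_ifs; ring.
Qed.

Lemma on_face_dip j : j != t -> on_face (dip T Cb V j).
Proof.
move=> jt; split; first exact: inP_dip.
rewrite /dip xc_mkpt ?star_rhs_interval ?S_out //; try lia.
by rewrite eq_sym (negbTE jt) /= mulr0n /ind; decide_ifs; ring.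
Qed.

Lemma on_face_flat_early k : (1 <= k < t)%N -> ~~ S (t - k) -> on_face (flat T Cu 1 k).
Proof.
move=> k_in Sk; split; first by apply: inP_flat => //; left.
rewrite /flat xc_mkpt ?star_rhs_interval ?(negbTE Sk) ?S_out //; try lia.
by rewrite /ind; decide_ifs; ring.
Qed.

Lemma on_face_flat_late k : (t < k <= T.+1)%N -> on_face (flat T Cu k T.+1).
Proof.
move=> k_in; split; first by apply: inP_flat => //; right; right; lia.
rewrite /flat xc_mkpt ?star_rhs_interval ?S_out //; try lia.
by rewrite /ind; decide_ifs; ring.
Qed.

Lemma on_face_startup k : (1 <= k <= t)%N -> S (t - k) \/ (k = t /\ eta = 0) ->
  on_face (startup T Cb V Vb k).
Proof.
move=> k_in Sk; split; first by apply: inP_startup => //; lia.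
have tk_le : (t - k <= sm)%N by case: Sk => [/(inS_range al_be)|[-> _]]; lia.
have : (t - k)%:R * V <= sm%:R * V by rewrite ler_pM2r // ler_nat.
have : 0 <= (t - k)%:R * V by rewrite mulr_ge0 // ltW.
have := Cb_ge => *.
rewrite /startup xc_mkpt ?star_rhs_interval ?(@S_out (t - T.+1)%N) //; try lia.
rewrite ifT ?min_r; try (lra || lia).
case: Sk => [Sk | [kt ->]]; last by rewrite kt subnn (@S_out 0) //= /ind; decide_ifs; ring.
by move: (inS_range al_be Sk) => ?; rewrite Sk /ind; decide_ifs; ring.
Qed.

Lemma on_face_flat_min_up : eta = L%:R -> S L -> on_face (flat T Cu (t - L) t).
Proof.
move=> etaL SL; split; first by apply: inP_flat => //; right; left; lia.
rewrite /flat xc_mkpt ?star_rhs_interval ?(@S_out (t - t)%N) //; try lia.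
by rewrite (_ : t - (t - L) = L)%N ?SL ?etaL /ind; [decide_ifs; ring | lia].
Qed.

Hypothesis eta_cases : eta = 0 \/ (eta = L%:R /\ S L).

Definition star_face_pts : seq 'rV[R]_(T + T) :=
  full_on T Cb :: [seq dip T Cb V j | j <- iota 1 T & j != t]
  ++ [seq flat T Cu 1 k | k <- iota 1 t.-1 & ~~ S (t - k)]
  ++ [seq startup T Cb V Vb k | k <- iota 1 t.-1 & S (t - k)]
  ++ [seq flat T Cu k T.+1 | k <- iota t.+1 (T - t)]
  ++ [:: if eta == 0 then startup T Cb V Vb t else flat T Cu (t - L) t].

Lemma star_face_pts_on_face q : q \in 0 :: star_face_pts -> on_face q.
Proof.
rewrite !inE !mem_cat.
case/or4P => [/eqP-> | /eqP-> | | /orP[]].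
- rewrite -(flat_nil T Cu T.+1); apply: on_face_flat_late; lia.
- exact: on_face_full_on.
- by case/mapP => j; rewrite mem_filter => /andP[jt _] ->; exact: on_face_dip.
- by case/mapP => k; rewrite mem_filter mem_iota => /andP[Sk k_in] ->;
    apply: on_face_flat_early; lia.
case/orP => [|/orP[]].
- by case/mapP => k; rewrite mem_filter mem_iota => /andP[Sk k_in] ->;
    apply: on_face_startup; [lia | left].
- by case/mapP => k; rewrite mem_iota => k_in ->; apply: on_face_flat_late; lia.
rewrite inE => /eqP ->; case: eqP => [eta0 | eta_n0].
  by apply: on_face_startup; [lia | right].
by case: eta_cases => [// | [etaL SL]]; exact: on_face_flat_min_up.
Qed.

Lemma rank_star_face_pts :
  ((T + T).-1 <= \rank (Defs.diffmx (origin_pts star_face_pts)))%N.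
Proof.
have t_lt : (t.-1 < T)%N by lia.
apply: (rank_ge_of_full_adds (v := delta_mx 0 (lshift T (Ordinal t_lt)))).
rewrite exv_delta prednK; last lia.
set B := (_ + _)%MS.
have memB q : q \in star_face_pts -> (q <= B)%MS.
  by move=> q_in; apply: submx_trans (origin_pts_sub q_in) (addsmxSl _ _).
have exvB j : (1 <= j <= T)%N -> (exv j <= B)%MS.
  move=> j_in; case: (eqVneq j t) => [-> | jt]; first exact: addsmxSr.
  rewrite (exv_full_on_dip T Cb V_gt0); apply/scalemx_sub/addmx_sub; first exact/memB/mem_head.
  rewrite -scaleN1r; apply/scalemx_sub/memB.
  by rewrite inE mem_cat (map_f (dip T Cb V)) ?orbT // mem_filter jt mem_iota; lia.
pose ysub Y := (mkpt T (fun=> 0) Y <= B)%MS.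
have ysubP X Y : mkpt T X Y \in star_face_pts -> ysub Y.
  by move=> /memB; exact: mkpt_y_sub exvB.
have ysub_ext Y1 Y2 : (forall j, (1 <= j <= T)%N -> Y1 j = Y2 j) -> ysub Y1 -> ysub Y2.
  by move=> eqY; rewrite /ysub (mkpt_ext (X1 := fun=> 0) (X2 := fun=> 0) _ eqY).
have ysub_diff k1 k2 : (k1 <= k2 <= T.+1)%N -> ysub (ind k1 T.+1) -> ysub (ind k1 k2) ->
    ysub (ind k2 T.+1).
  move=> k_le Y1 Y2; apply: ysub_ext (mkpt_y_subD (-1) Y2 Y1) => j _.
  by rewrite (@ind_cat R k1 k2 T.+1 j k_le); ring.
have ysub_early k : (1 <= k < t)%N -> ysub (ind k T.+1).
  move=> k_in; case Sk: (S (t - k)).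
    apply: (ysubP (fun j => if (k <= j)%N then Num.min Cb (Vb + (j - k)%:R * V) else 0)).
    by rewrite !inE !mem_cat (map_f (startup T Cb V Vb)) ?orbT // mem_filter Sk mem_iota; lia.
  apply: (ysub_diff 1%N) => //; first lia.
    by apply: (ysubP (fun=> Cb)); exact: mem_head.
  apply: (ysubP (fun j => Cu * ind 1 k j)).
  by rewrite !inE !mem_cat (map_f (flat T Cu 1)) ?orbT // mem_filter Sk mem_iota; lia.
apply: sub1mx_mkpt exvB _ => k k_in.
case: (ltngtP k t) => [kt | tk | ->]; first by apply: ysub_early; lia.
  apply: (ysubP (fun j => Cu * ind k T.+1 j)).
  by rewrite !inE !mem_cat (map_f (fun k => flat T Cu k T.+1)) ?orbT // mem_iota; lia.
have last_in : (if eta == 0 then startup T Cb V Vb t else flat T Cu (t - L) t) \in star_face_pts.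
  by rewrite !inE !mem_cat mem_seq1 eqxx !orbT.
case: eqP last_in => _ last_in.
  exact: (ysubP (fun j => if (t <= j)%N then Num.min Cb (Vb + (j - t)%:R * V) else 0)).
apply: (ysub_diff (t - L)%N); first lia.
  by apply: ysub_early; lia.
exact: (ysubP (fun j => Cu * ind (t - L) t j)).
Qed.

End StarFace.

Section StarFacet.
Variables (R : realType) (T L ell : nat) (Cb Cu V Vb eta : R) (al be sm : nat).
Local Notation P := (inP T L ell Cb Cu V Vb).
Local Notation star t := (@star_rhs R T Cb Vb V eta al be sm t).
Hypotheses (Cu_gt0 : 0 < Cu) (Cu_Vb : Cu < Vb) (V_gt0 : 0 < V) (Vb_V : Vb + V <= Cb)
  (Cb_ge : Vb + sm%:R * V <= Cb) (L_gt0 : (0 < L)%N) (L_sm : (L < sm)%N)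
  (al_be : (al < be <= sm)%N) (S_gap : (be = al + 1 \/ sm <= L + al)%N)
  (eta_ge0 : 0 <= eta) (eta_le : eta <= L%:R).

Lemma star_valid t : (sm + 2 <= t <= T)%N ->
  valid_for (conv P) (fun z => xc T z t) (star t).
Proof.
move=> t_in; apply: conv_valid; [exact: scalar_xc | exact: scalar_star_rhs |].
by move=> z; apply: star_valid_inP => //; exact: ltnW.
Qed.

Lemma star_facet t : (sm + 2 <= t <= T)%N -> eta = 0 \/ (eta = L%:R /\ inS al be sm L) ->
  facet_for (conv P) (fun z => xc T z t) (star t).
Proof.
move=> t_in eta_cases; have t_lt : (t.-1 < T)%N by lia.
apply: (facet_for_conv (c := lshift T (Ordinal t_lt))).
- exact: scalar_xc.
- exact: scalar_star_rhs.
- by move=> z; apply: star_valid_inP => //; exact: ltnW.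
- rewrite exv_delta prednK; last lia.
  rewrite xc_exv /star_rhs ?yc_exv; last lia.
  by rewrite big1 => [|s _]; rewrite ?yc_exv ?subrr ?mulr0 ?subr0 ?addr0 ?oner_eq0.
- exists _, (origin_pts (full_dim_pts T Cb Cu V)).
  split; last exact: (rank_full_dim_pts T Cu_gt0 Cu_Vb V_gt0 Vb_V).
  by move=> i; apply: (full_dim_pts_inP L ell Cu_gt0 Cu_Vb V_gt0 Vb_V (origin_ptsP i)).
exists _, (origin_pts (star_face_pts T L Cb Cu V Vb eta al be sm t)); split.
  by move=> i; apply: star_face_pts_on_face => //; exact: origin_ptsP.
by apply: rank_star_face_pts.
Qed.

End StarFacet.

Theorem proposition6 (R : realType) (T L ell : nat) (Cbar Cund V Vbar eta : R)
  (alpha beta smax : nat) :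
  (0 < T)%N -> (0 < L)%N -> (0 < ell)%N ->
  Cund < Cbar -> 0 < Cund -> 0 < V -> Vbar + V <= Cbar ->
  Cund < Vbar -> Vbar < Cund + V ->
  0 <= eta -> eta <= Num.min (L%:R) ((Cbar - Vbar) / V) ->
  (L + 1 <= smax)%N -> (smax%:Z <= T%:Z - 2) ->
  (smax%:Z <= Num.floor ((Cbar - Vbar) / V)) ->
  (1 <= alpha)%N -> (alpha < beta)%N -> (beta <= smax)%N ->
  (beta = alpha + 1 \/ (smax <= L + alpha)%N)%N ->
  let A := conv (inP T L ell Cbar Cund V Vbar) in
  let star t := fun z : 'rV[R]_(T + T) =>
    (Vbar + eta * V) * yc T z t + (Cbar - Vbar - eta * V) * yc T z (t - 1)
    - \sum_(0 <= s < smax.+1 | inS alpha beta smax s)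
        (Cbar - Vbar - s%:R * V) * (yc T z (t - s) - yc T z (t - s - 1)) in
  let star2 t := fun z : 'rV[R]_(T + T) =>
    (Vbar + eta * V) * yc T z t + (Cbar - Vbar - eta * V) * yc T z (t + 1)
    - \sum_(0 <= s < smax.+1 | inS alpha beta smax s)
        (Cbar - Vbar - s%:R * V) * (yc T z (t + s) - yc T z (t + s + 1)) in
  (forall t, (smax + 2 <= t <= T)%N -> valid_for A (fun z => xc T z t) (star t)) /\
  (forall t, (1 <= t)%N -> (t%:Z <= T%:Z - smax%:Z - 1) ->
     valid_for A (fun z => xc T z t) (star2 t)) /\
  ((eta = 0 \/ eta = (Cbar - Vbar) / V \/ (eta = L%:R /\ inS alpha beta smax L)) ->
     (forall t, (smax + 2 <= t <= T)%N -> facet_for A (fun z => xc T z t) (star t)) /\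
     (forall t, (1 <= t)%N -> (t%:Z <= T%:Z - smax%:Z - 1) ->
        facet_for A (fun z => xc T z t) (star2 t))).
Proof.
move=> T_gt0 L_gt0 _ _ Cu_gt0 V_gt0 Vb_V Cu_Vb _ eta_ge0 eta_min L_sm sm_T sm_floor
  al_gt0 al_be be_sm S_gap A star star2.
have [eta_L eta_CV] : eta <= L%:R /\ eta <= (Cbar - Vbar) / V by apply/andP; rewrite -le_min.
have sm_CV : smax%:R <= (Cbar - Vbar) / V by move: sm_floor; rewrite floor_ge_int.
have Cb_ge : Vbar + smax%:R * V <= Cbar by move: sm_CV; rewrite ler_pdivlMr //; lra.
have {}al_be : (alpha < beta <= smax)%N by apply/andP.
have {}L_sm : (L < smax)%N by lia.
have rev_in t : (1 <= t)%N -> (t%:Z <= T%:Z - smax%:Z - 1) -> (smax + 2 <= T.+1 - t <= T)%N.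
  by move=> *; lia.
have xcE t z : (1 <= t <= T)%N -> xc T z t = xc T (z *m revmx) (T.+1 - t).
  by move=> t_in; rewrite xc_revmx ?subKn //; lia.
have star2E t z : (1 <= t)%N -> (t%:Z <= T%:Z - smax%:Z - 1) ->
    star2 t z = star (T.+1 - t)%N (z *m revmx).
  by move=> *; apply: star2_rhs_revmx; lia.
split; [|split].
- by move=> t; apply: star_valid.
- move=> t t_ge1 t_le.
  have := star_valid (ell := ell) (Cu := Cund) V_gt0 Cb_ge L_sm al_be S_gap eta_ge0 eta_L
    (rev_in t t_ge1 t_le).
  apply: (valid_for_mulmx (revmxK R T) (fun z => @inP_revmx R T L ell Cbar Cund V Vbar z)) => z.
    by apply: xcE; lia.
  exact: star2E.
move=> eta_cases.
have {}eta_cases : eta = 0 \/ (eta = L%:R /\ inS alpha beta smax L).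
  case: eta_cases => [|[eta_CV'|]]; [by left | | by right].
  have : (L + 1)%:R <= smax%:R :> R by rewrite ler_nat addn1.
  by rewrite natrD; lra.
have facet t : (smax + 2 <= t <= T)%N -> facet_for A (fun z => xc T z t) (star t).
  by move=> t_in; apply: (star_facet ell Cu_gt0 Cu_Vb V_gt0 Vb_V Cb_ge L_gt0 L_sm al_be S_gap
    eta_ge0 eta_L t_in eta_cases).
split=> // t t_ge1 t_le; have := facet _ (rev_in t t_ge1 t_le).
apply: (facet_for_mulmx (revmxK R T) (fun z => @inP_revmx R T L ell Cbar Cund V Vbar z)) => z.
  by apply: xcE; lia.
exact: star2E.
Qed.
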